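(* Let $\sigma>0$, $k\in\{0,1,2\}$, $l\in\{0,1\}$, and let $f$ be $(\sigma',2)$-Gevrey regular on $[0,1]$ for some $\sigma'>\sigma$. If $u\in G_{\sigma,k,l}$ then $fu\in G_{\sigma,k,l}$ and $\|fu\|_{\sigma,k,l}\le C\|u\|_{\sigma,k,l}$, where $C$ depends only on $\sigma,\sigma',k,l$ and $f$.
   Context: Let $I=(0,1)$. A function $u\in C^\infty(\overline I)$ is $(\sigma,k)$-Gevrey regular ($\sigma,k>0$) if there is $C>0$ with $\sup_{x\in I}|u^{(n)}(x)|\le C\sigma^{-n}(n!)^k$ for all $n\ge0$. For $\sigma>0$, $u\in C^\infty(\overline I)$, $k\in\{0,1,2\}$, $l\in\{0,1\}$, set $|u|^{0}_{\sigma,k,l}=\big(\sum_{n=0}^\infty\frac{\sigma^{2n}}{n!^2(n+1)!^2}n^{k+l}\int_0^1(x/\sigma)^k|\partial_x^nu|^2dx\big)^{1/2}$ (with $0^0:=1$); $\|u\|_{\sigma,0,0}=|u|^0_{\sigma,0,0}$, and for $k+l>0$, $\|u\|_{\sigma,k,l}=|u|^0_{\sigma,k,l}+(\int_0^1(x/\sigma)^k|u|^2dx)^{1/2}$. $G_{\sigma,k,l}=\{u\in C^\infty(\overline I):\|u\|_{\sigma,k,l}<\infty\}$. *)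

From Stdlib Require Import Reals Lra Lia Arith ClassicalEpsilon.
Open Scope R_scope.

Definition deriv01 (g : R -> R) (x l : R) : Prop :=
  forall eps, 0 < eps -> exists delta, 0 < delta /\
    forall h, h <> 0 -> Rabs h < delta -> 0 <= x + h <= 1 ->
      Rabs ((g (x + h) - g x) / h - l) < eps.

Definition smooth01 (u : R -> R) (D : nat -> R -> R) : Prop :=
  (forall x, 0 <= x <= 1 -> D 0%nat x = u x) /\
  (forall n x, 0 <= x <= 1 -> deriv01 (D n) x (D (S n) x)).

Definition gevrey (sigma : R) (k : nat) (D : nat -> R -> R) : Prop :=
  exists C, forall n x, 0 < x < 1 ->
    Rabs (D n x) <= C * (/ sigma) ^ n * (INR (fact n)) ^ k.

(* Riemann integral over [0,1] (the integrands used are continuous). *)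
Definition Int01 (g : R -> R) : R :=
  epsilon (inhabits 0)
    (fun v => exists pr : Riemann_integrable g 0 1, RiemannInt pr = v).

(* n-th term of the series defining (|u|^0_{sigma,k,l})^2; note 0^0 = 1 for pow. *)
Definition gterm (sigma : R) (k l : nat) (D : nat -> R -> R) (n : nat) : R :=
  sigma ^ (2 * n) / (INR (fact n) ^ 2 * INR (fact (n + 1)) ^ 2)
  * INR n ^ (k + l) * Int01 (fun x => (x / sigma) ^ k * (D n x) ^ 2).

Definition in_G (sigma : R) (k l : nat) (D : nat -> R -> R) : Prop :=
  exists s, Un_cv (fun N => sum_f_R0 (gterm sigma k l D) N) s.

Definition seminorm0 (sigma : R) (k l : nat) (D : nat -> R -> R) : R :=
  sqrt (epsilon (inhabits 0)
    (fun s => Un_cv (fun N => sum_f_R0 (gterm sigma k l D) N) s)).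

Definition gnorm (sigma : R) (k l : nat) (D : nat -> R -> R) : R :=
  if Nat.eqb (k + l) 0 then seminorm0 sigma k l D
  else seminorm0 sigma k l D
       + sqrt (Int01 (fun x => (x / sigma) ^ k * (D 0%nat x) ^ 2)).

From Stdlib Require Import Reals Arith Lra Lia Psatz ClassicalEpsilon FunctionalExtensionality.
Open Scope R_scope.

(* Leibniz: (f u)^(n) = sum_j C(n,j) f^(j) u^(n-j).  With q = sigma/sigma' < 1, the
   Cauchy-Schwarz inequality with weights q^j and the Gevrey bound
   |f^(j)| <= M sigma'^-j j!^2 give
     |(f u)^(n)|^2 <= M^2/(1-q) sum_j C(n,j)^2 sigma'^-2j j!^4 q^-j |u^(n-j)|^2.
   Since j! (n-j+1)! <= (n+1)!, the weight sigma^2n / (n!^2 (n+1)!^2) of order n absorbs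
   C(n,j)^2 j!^4 sigma'^-2j up to the factor q^2j times the weight of order n-j, and
   n^(k+l) <= (1+j)^3 (n-j)^(k+l).  Hence the n-th term of the series of f u is bounded by
   the Cauchy product of the summable sequence q^j (1+j)^3 with the terms of the series
   of u, which bounds the series of f u by a constant times that of u. *)

(** * Derivatives within [0,1] and the Leibniz rule *)

Definition increments01 (x h : R) : Prop := h <> 0 /\ 0 <= x + h <= 1.

Definition cont01 (g : R -> R) : Prop :=
  forall x, 0 <= x <= 1 -> limit1_in (fun h => g (x + h)) (increments01 x) (g x) 0.

Lemma deriv01_limit g x l :
  deriv01 g x l <->
  limit1_in (fun h => (g (x + h) - g x) / h) (increments01 x) l 0.
Proof.
  unfold deriv01, limit1_in, limit_in, increments01; simpl; unfold R_dist; split.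
  - intros H eps Heps; destruct (H eps Heps) as [d [Hd Hh]]; exists d; split; auto.
    intros h [[Hh0 Hx] Hsmall]; rewrite Rminus_0_r in Hsmall; auto.
  - intros H eps Heps; destruct (H eps Heps) as [d [Hd Hh]]; exists d; split; auto.
    intros h Hh0 Hsmall Hx; apply Hh; rewrite Rminus_0_r; auto.
Qed.

Lemma deriv01_ext g1 g2 x l1 l2 :
  (forall y, g1 y = g2 y) -> l1 = l2 -> deriv01 g1 x l1 -> deriv01 g2 x l2.
Proof.
  intros Hg <- H eps Heps; destruct (H eps Heps) as [d [Hd Hh]]; exists d; split; auto.
  intros; rewrite <- !Hg; auto.
Qed.

Lemma deriv01_cont g x l :
  deriv01 g x l -> limit1_in (fun h => g (x + h)) (increments01 x) (g x) 0.
Proof.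
  intros H; apply deriv01_limit in H.
  assert (Hlim := limit_plus _ _ _ _ _ _ (limit_free (fun _ => g x) (increments01 x) 0 0)
     (limit_mul _ _ _ _ _ _ (lim_x (increments01 x) 0) H)).
  rewrite Rmult_0_l, Rplus_0_r in Hlim.
  eapply limit1_ext; [|exact Hlim]. intros h [Hh _]; simpl. field; auto.
Qed.

Lemma deriv01_plus g1 g2 x l1 l2 :
  deriv01 g1 x l1 -> deriv01 g2 x l2 -> deriv01 (fun y => g1 y + g2 y) x (l1 + l2).
Proof.
  rewrite !deriv01_limit; intros H1 H2.
  eapply limit1_ext; [|exact (limit_plus _ _ _ _ _ _ H1 H2)].
  intros h [Hh _]; simpl. field; auto.
Qed.

Lemma deriv01_scal c g x l : deriv01 g x l -> deriv01 (fun y => c * g y) x (c * l).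
Proof.
  rewrite !deriv01_limit; intros H.
  eapply limit1_ext;
    [|exact (limit_mul _ _ _ _ _ _ (limit_free (fun _ => c) (increments01 x) 0 0) H)].
  intros h [Hh _]; simpl. field; auto.
Qed.

Lemma deriv01_mult g1 g2 x l1 l2 :
  deriv01 g1 x l1 -> deriv01 g2 x l2 ->
  deriv01 (fun y => g1 y * g2 y) x (l1 * g2 x + g1 x * l2).
Proof.
  intros H1 H2. assert (C1 := deriv01_cont _ _ _ H1).
  apply deriv01_limit in H1; apply deriv01_limit in H2; apply deriv01_limit.
  eapply limit1_ext; [|exact (limit_plus _ _ _ _ _ _
     (limit_mul _ _ _ _ _ _ H1 (limit_free (fun _ => g2 x) (increments01 x) 0 0))
     (limit_mul _ _ _ _ _ _ C1 H2))].
  intros h [Hh _]; simpl. field; auto.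
Qed.

Lemma deriv01_sum (G : nat -> R -> R) (L : nat -> R) x n :
  (forall j, (j <= n)%nat -> deriv01 (G j) x (L j)) ->
  deriv01 (fun y => sum_f_R0 (fun j => G j y) n) x (sum_f_R0 L n).
Proof.
  induction n as [|n IH]; intros H; simpl.
  - apply H; lia.
  - apply deriv01_plus; [apply IH; intros; apply H|apply H]; lia.
Qed.

Fixpoint binom (n j : nat) : nat :=
  match n, j with
  | _, O => 1%nat
  | O, S _ => 0%nat
  | S n', S j' => (binom n' j' + binom n' (S j'))%nat
  end.

Lemma binom_small n j : (n < j)%nat -> binom n j = 0%nat.
Proof.
  revert j; induction n as [|n IH]; intros [|j] Hj; simpl; try lia; auto.
  rewrite !IH; lia.
Qed.

Lemma binom_n_0 n : binom n 0 = 1%nat.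
Proof. now destruct n. Qed.

Lemma binom_C n j : (j <= n)%nat -> INR (binom n j) = C n j.
Proof.
  assert (Hfact := fun m => INR_fact_neq_0 m).
  revert j; induction n as [|n IH]; intros [|j] Hj.
  - unfold C; simpl; field.
  - lia.
  - unfold C; rewrite Nat.sub_0_r; simpl binom.
    change (INR (fact 0)) with 1; change (INR 1) with 1; field; auto.
  - simpl binom; rewrite plus_INR.
    destruct (Nat.eq_dec j n) as [->|Hjn].
    + rewrite (binom_small n (S n)), IH by lia.
      unfold C; rewrite !Nat.sub_diag; change (INR (fact 0)) with 1; change (INR 0) with 0.
      field; auto.
    + rewrite !IH by lia. apply pascal; lia.
Qed.

Definition leibniz (n : nat) (a b : nat -> R) : R :=
  sum_f_R0 (fun j => INR (binom n j) * a j * b (n - j)%nat) n.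

Lemma leibniz_S n a b :
  leibniz (S n) a b = leibniz n (fun j => a (S j)) b + leibniz n a (fun j => b (S j)).
Proof.
  unfold leibniz.
  set (T := sum_f_R0 (fun j => INR (binom n j) * a j * b (S n - j)%nat) (S n)).
  assert (E1 : T = sum_f_R0 (fun j => INR (binom n j) * a j * b (S (n - j))) n).
  { unfold T; rewrite tech5, (binom_small n (S n)), Rmult_0_l, Rmult_0_l, Rplus_0_r by lia.
    apply sum_eq; intros i Hi. rewrite Nat.sub_succ_l by lia; reflexivity. }
  assert (E2 : T = a 0%nat * b (S n) +
     sum_f_R0 (fun i => INR (binom n (S i)) * a (S i) * b (n - i)%nat) n).
  { unfold T; rewrite decomp_sum by lia; simpl pred.
    rewrite binom_n_0; simpl; ring. }
  rewrite decomp_sum by lia; simpl pred.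
  replace (sum_f_R0 (fun i => INR (binom (S n) (S i)) * a (S i) * b (S n - S i)%nat) n)
    with (sum_f_R0 (fun i => INR (binom n i) * a (S i) * b (n - i)%nat) n +
          sum_f_R0 (fun i => INR (binom n (S i)) * a (S i) * b (n - i)%nat) n).
  2:{ rewrite <- plus_sum; apply sum_eq; intros i Hi; simpl binom; rewrite plus_INR.
      replace (S n - S i)%nat with (n - i)%nat by lia; ring. }
  rewrite <- E1, E2; simpl; ring.
Qed.

Definition leibnizD (Df Du : nat -> R -> R) (n : nat) (x : R) : R :=
  leibniz n (fun j => Df j x) (fun j => Du j x).

Lemma smooth01_mult f Df u Du :
  smooth01 f Df -> smooth01 u Du -> smooth01 (fun x => f x * u x) (leibnizD Df Du).
Proof.
  intros [F0 F1] [U0 U1]; split.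
  - intros x Hx; unfold leibnizD, leibniz; simpl; rewrite F0, U0 by auto; ring.
  - intros n x Hx; unfold leibnizD; rewrite leibniz_S; unfold leibniz.
    eapply deriv01_ext; cycle 2.
    { apply (deriv01_sum (fun j y => INR (binom n j) * (Df j y * Du (n - j)%nat y))).
      intros j Hj; apply deriv01_scal, deriv01_mult; auto. }
    + intro y; apply sum_eq; intros; ring.
    + rewrite <- plus_sum; apply sum_eq; intros; ring.
Qed.

(** * Continuity and integration on [0,1] *)

Lemma cont01_const c : cont01 (fun _ => c).
Proof. intros x _; exact (limit_free (fun _ => c) _ 0 0). Qed.

Lemma cont01_id : cont01 (fun y => y).
Proof.
  intros x _.
  assert (H := limit_plus _ _ _ _ _ _
    (limit_free (fun _ => x) (increments01 x) 0 0) (lim_x (increments01 x) 0)).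
  rewrite Rplus_0_r in H; exact H.
Qed.

Lemma cont01_plus g1 g2 : cont01 g1 -> cont01 g2 -> cont01 (fun y => g1 y + g2 y).
Proof. intros H1 H2 x Hx; exact (limit_plus _ _ _ _ _ _ (H1 x Hx) (H2 x Hx)). Qed.

Lemma cont01_mult g1 g2 : cont01 g1 -> cont01 g2 -> cont01 (fun y => g1 y * g2 y).
Proof. intros H1 H2 x Hx; exact (limit_mul _ _ _ _ _ _ (H1 x Hx) (H2 x Hx)). Qed.

Lemma cont01_pow g k : cont01 g -> cont01 (fun y => g y ^ k).
Proof.
  intros H; induction k as [|k IH]; simpl.
  - apply cont01_const.
  - exact (cont01_mult _ _ H IH).
Qed.

Lemma cont01_sum (G : nat -> R -> R) n :
  (forall j, cont01 (G j)) -> cont01 (fun y => sum_f_R0 (fun j => G j y) n).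
Proof.
  intros H; induction n as [|n IH]; simpl; [apply H|exact (cont01_plus _ _ IH (H _))].
Qed.

Lemma smooth01_cont u D : smooth01 u D -> forall n, cont01 (D n).
Proof. intros [_ H] n x Hx; exact (deriv01_cont _ _ _ (H n x Hx)). Qed.

(* Extending g by constants outside [0,1] makes it continuous on all of [0,1]
   in the two-sided sense required by [continuity_implies_RiemannInt]. *)
Lemma cont01_integrable g : cont01 g -> Riemann_integrable g 0 1.
Proof.
  intros H. set (clamp y := Rmax 0 (Rmin 1 y)).
  assert (Hclamp : Riemann_integrable (fun y => g (clamp y)) 0 1).
  { apply continuity_implies_RiemannInt; [lra|]. intros x Hx eps Heps.
    destruct (H x Hx eps Heps) as [d [Hd Hh]]; simpl in Hh; unfold R_dist in Hh.
    exists d; split; auto. intros y [_ Hy]; simpl in *; unfold R_dist in *.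
    assert (Cx : clamp x = x) by (unfold clamp, Rmax, Rmin; repeat destruct Rle_dec; lra).
    rewrite Cx.
    destruct (Req_dec (clamp y - x) 0) as [E|E].
    - replace (clamp y) with x by lra. rewrite Rminus_diag, Rabs_R0; auto.
    - replace (clamp y) with (x + (clamp y - x)) by ring. apply Hh. split.
      + split; auto. unfold clamp, Rmax, Rmin; repeat destruct Rle_dec; lra.
      + rewrite Rminus_0_r. eapply Rle_lt_trans; [|exact Hy].
        unfold clamp, Rmax, Rmin; repeat destruct Rle_dec;
          unfold Rabs; repeat destruct Rcase_abs; lra. }
  eapply Riemann_integrable_ext; [|exact Hclamp]. intros y Hy.
  rewrite Rmin_left, Rmax_right in Hy by lra.
  unfold clamp, Rmax, Rmin; repeat destruct Rle_dec; f_equal; lra.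
Qed.

Lemma Int01_eq g (pr : Riemann_integrable g 0 1) : Int01 g = RiemannInt pr.
Proof.
  unfold Int01. destruct (epsilon_spec (inhabits 0)
    (fun v => exists pr : Riemann_integrable g 0 1, RiemannInt pr = v)) as [pr' E].
  - exists (RiemannInt pr), pr; reflexivity.
  - rewrite <- E; apply RiemannInt_P5.
Qed.

Lemma Int01_le g1 g2 : cont01 g1 -> cont01 g2 ->
  (forall x, 0 < x < 1 -> g1 x <= g2 x) -> Int01 g1 <= Int01 g2.
Proof.
  intros H1 H2 H. rewrite (Int01_eq g1 (cont01_integrable _ H1)),
    (Int01_eq g2 (cont01_integrable _ H2)).
  apply RiemannInt_P19; auto; lra.
Qed.

Lemma Int01_zero : Int01 (fun _ => 0) = 0.
Proof.
  assert (E := Int01_eq _ (RiemannInt_P14 0 1 0)).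
  rewrite RiemannInt_P15 in E; unfold fct_cte in E; lra.
Qed.

Lemma Int01_ge0 g : cont01 g -> (forall x, 0 < x < 1 -> 0 <= g x) -> 0 <= Int01 g.
Proof. intros Hg H; rewrite <- Int01_zero; exact (Int01_le _ _ (cont01_const 0) Hg H). Qed.

Lemma Int01_plus_scal g1 g2 c : cont01 g1 -> cont01 g2 ->
  Int01 (fun x => g1 x + c * g2 x) = Int01 g1 + c * Int01 g2.
Proof.
  intros H1 H2. set (p1 := cont01_integrable _ H1); set (p2 := cont01_integrable _ H2).
  rewrite (Int01_eq _ (RiemannInt_P10 c p1 p2)), (Int01_eq _ p1), (Int01_eq _ p2).
  apply RiemannInt_P13.
Qed.

Lemma Int01_sum (c : nat -> R) (G : nat -> R -> R) n : (forall j, cont01 (G j)) ->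
  Int01 (fun x => sum_f_R0 (fun j => c j * G j x) n) = sum_f_R0 (fun j => c j * Int01 (G j)) n.
Proof.
  intros H; induction n as [|n IH]; simpl.
  - replace (fun x => c 0%nat * G 0%nat x) with (fun x => 0 + c 0%nat * G 0%nat x)
      by (apply functional_extensionality; intro; ring).
    rewrite (Int01_plus_scal _ _ _ (cont01_const 0) (H 0%nat)), Int01_zero; ring.
  - rewrite Int01_plus_scal, IH; auto.
    apply cont01_sum; intro j; apply cont01_mult; [apply cont01_const|apply H].
Qed.

(** * Finite sums *)

Lemma sum_sq_le_weighted (y w : nat -> R) n : (forall j, 0 < w j) ->
  sum_f_R0 y n ^ 2 <= sum_f_R0 w n * sum_f_R0 (fun j => y j ^ 2 / w j) n.
Proof.
  intros Hw; induction n as [|n IH].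
  - simpl; right; field; apply Rgt_not_eq, Hw.
  - rewrite !tech5.
    assert (HT : 0 < sum_f_R0 w n) by (apply tech1; auto).
    assert (HS : 0 <= sum_f_R0 (fun j => y j ^ 2 / w j) n).
    { apply cond_pos_sum; intro j; pose proof (Hw j).
      apply Rmult_le_pos; [nra|left; apply Rinv_0_lt_compat; lra]. }
    set (A := sum_f_R0 y n) in *; set (T := sum_f_R0 w n) in *.
    set (Q := sum_f_R0 (fun j => y j ^ 2 / w j) n) in *.
    assert (Ht := Hw (S n)); set (t := w (S n)) in *.
    set (z := y (S n) / t).
    replace (y (S n) ^ 2 / t) with (z ^ 2 * t) by (unfold z; field; lra).
    replace (y (S n)) with (z * t) by (unfold z; field; lra).
    assert (Hz : 0 <= T * z ^ 2 + Q - 2 * A * z).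
    { apply Rmult_le_reg_l with T; [lra|].
      replace (T * (T * z ^ 2 + Q - 2 * A * z)) with ((T * z - A) ^ 2 + (T * Q - A ^ 2))
        by ring.
      pose proof (pow2_ge_0 (T * z - A)); lra. }
    nra.
Qed.

Lemma sum_cauchy_product_le (a b : nat -> R) N :
  (forall j, 0 <= a j) -> (forall j, 0 <= b j) ->
  sum_f_R0 (fun n => sum_f_R0 (fun j => a j * b (n - j)%nat) n) N
  <= sum_f_R0 a N * sum_f_R0 b N.
Proof.
  intros Ha Hb. destruct N as [|N]; [simpl; lra|].
  rewrite cauchy_finite by lia.
  match goal with |- _ <= _ + ?rest => assert (0 <= rest) end; [|lra].
  apply cond_pos_sum; intro; apply cond_pos_sum; intro; apply Rmult_le_pos; auto.
Qed.

(* With t = (1 - q)/7 one has (1 + t)^3 <= 1 + 7t, so r = q (1 + t)^3 <= 1 - (1 - q)^2;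
   Bernoulli's inequality t (1 + j) <= (1 + t)^j then dominates the series by a
   geometric one with ratio r. *)
Lemma geom_cubic_bounded q : 0 < q < 1 ->
  exists G, forall N, sum_f_R0 (fun j => q ^ j * (1 + INR j) ^ 3) N <= G.
Proof.
  intros Hq. set (t := (1 - q) / 7). set (r := q * (1 + t) ^ 3).
  assert (Ht : 0 < t <= 1) by (unfold t; lra).
  assert (Ht3 : 0 < t ^ 3) by (apply pow_lt; lra).
  assert (Hr : 0 <= r < 1).
  { assert ((1 + t) ^ 3 <= 1 + 7 * t) by (simpl; nra).
    unfold r; split; [apply Rmult_le_pos; [lra|apply pow_le; lra]|].
    unfold t in *; nra. }
  exists (/ (t ^ 3 * (1 - r))). intros N.
  apply Rle_trans with (sum_f_R0 (fun j => r ^ j * / t ^ 3) N).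
  - apply sum_Rle; intros j _.
    assert (Hj : t * (1 + INR j) <= (1 + t) ^ j).
    { pose proof (poly j t (proj1 Ht)); pose proof (pos_INR j); nra. }
    assert (Hj3 : (t * (1 + INR j)) ^ 3 <= ((1 + t) ^ j) ^ 3).
    { apply pow_incr; split; [|exact Hj]. pose proof (pos_INR j); nra. }
    unfold r; rewrite Rpow_mult_distr, <- pow_mult, Nat.mul_comm, pow_mult.
    rewrite Rpow_mult_distr in Hj3.
    apply Rmult_le_reg_r with (t ^ 3); [exact Ht3|].
    replace (q ^ j * ((1 + t) ^ j) ^ 3 * / t ^ 3 * t ^ 3) with (q ^ j * ((1 + t) ^ j) ^ 3)
      by (field; lra).
    replace (q ^ j * (1 + INR j) ^ 3 * t ^ 3) with (q ^ j * (t ^ 3 * (1 + INR j) ^ 3)) by ring.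
    apply Rmult_le_compat_l; [apply pow_le; lra|exact Hj3].
  - rewrite <- scal_sum, tech3 by lra.
    rewrite Rinv_mult. apply Rmult_le_compat_l.
    + left; apply Rinv_0_lt_compat; exact Ht3.
    + pose proof (pow_le r (S N) (proj1 Hr)).
      unfold Rdiv; rewrite <- (Rmult_1_l (/ (1 - r))) at 2.
      apply Rmult_le_compat_r; [left; apply Rinv_0_lt_compat|]; lra.
Qed.

(** * The Gevrey weights *)

Lemma fact_mul_le a b : (fact a * fact b <= fact (a + b))%nat.
Proof.
  induction b as [|b IH]; [simpl; rewrite Nat.add_0_r; lia|].
  rewrite Nat.add_succ_r; simpl; nia.
Qed.

Definition gcoef (sigma : R) (n : nat) : R :=
  sigma ^ (2 * n) / (INR (fact n) ^ 2 * INR (fact (n + 1)) ^ 2).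

Lemma gcoef_pos s n : 0 < s -> 0 < gcoef s n.
Proof.
  intros Hs; pose proof (INR_fact_lt_0 n); pose proof (INR_fact_lt_0 (n + 1)).
  unfold gcoef; apply Rdiv_lt_0_compat; [apply pow_lt; lra|].
  apply Rmult_lt_0_compat; apply pow_lt; lra.
Qed.

Lemma gcoef_0 s : gcoef s 0 = 1.
Proof. unfold gcoef; simpl; field. Qed.

(* The Gevrey-2 weight j!^2 of f^(j) is absorbed by the ratio of the factors
   (n+1)! and (n-j+1)! in the two weights, since j! (n-j+1)! <= (n+1)!. *)
Lemma gcoef_binom_le s s' n j : 0 < s -> 0 < s' -> (j <= n)%nat ->
  gcoef s n * (C n j * ((/ s') ^ j * INR (fact j) ^ 2)) ^ 2
  <= (s / s') ^ (2 * j) * gcoef s (n - j).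
Proof.
  intros Hs Hs' Hj. destruct (Nat.le_exists_sub j n Hj) as [m [-> _]].
  replace (m + j - j)%nat with m by lia.
  assert (Hle := fact_mul_le j (m + 1)); apply le_INR in Hle; rewrite mult_INR in Hle.
  replace (j + (m + 1))%nat with (m + j + 1)%nat in Hle by lia.
  assert (Hsq : forall x k, x ^ (2 * k) = (x ^ k) ^ 2)
    by (intros; rewrite Nat.mul_comm; apply pow_mult).
  unfold gcoef, C; replace (m + j - j)%nat with m by lia.
  rewrite !Hsq, pow_add; unfold Rdiv at 3; rewrite (Rpow_mult_distr s (/ s') j).
  assert (Ha := pow_lt s m Hs); assert (Hb := pow_lt s j Hs).
  assert (Hc : 0 < (/ s') ^ j) by (apply pow_lt, Rinv_0_lt_compat; lra).
  pose proof (INR_fact_lt_0 j); pose proof (INR_fact_lt_0 m);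
  pose proof (INR_fact_lt_0 (m + j)); pose proof (INR_fact_lt_0 (m + 1));
  pose proof (INR_fact_lt_0 (m + j + 1)).
  set (a := s ^ m) in *; set (b := s ^ j) in *; set (c := (/ s') ^ j) in *.
  set (Fj := INR (fact j)) in *; set (Fm := INR (fact m)) in *;
  set (Fn := INR (fact (m + j))) in *; set (Fm1 := INR (fact (m + 1))) in *;
  set (Fn1 := INR (fact (m + j + 1))) in *.
  set (P := (a * b * c) ^ 2 / (Fm * Fm1 * Fn1) ^ 2).
  assert (HP : 0 <= P).
  { unfold P; apply Rmult_le_pos; [apply pow2_ge_0|].
    left; apply Rinv_0_lt_compat, pow_lt; repeat apply Rmult_lt_0_compat; auto. }
  replace ((a * b) ^ 2 / (Fn ^ 2 * Fn1 ^ 2) * (Fn / (Fj * Fm) * (c * Fj ^ 2)) ^ 2)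
    with (P * (Fj * Fm1) ^ 2) by (unfold P; field; repeat split; lra).
  replace ((b * c) ^ 2 * (a ^ 2 / (Fm ^ 2 * Fm1 ^ 2))) with (P * Fn1 ^ 2)
    by (unfold P; field; repeat split; lra).
  apply Rmult_le_compat_l; [exact HP|].
  apply pow_incr; split; [left; apply Rmult_lt_0_compat|]; auto.
Qed.

Lemma pow_INR_le_shift n j K : (j <= n)%nat -> (K <= 3)%nat -> (1 <= n - j)%nat ->
  INR n ^ K <= (1 + INR j) ^ 3 * INR (n - j) ^ K.
Proof.
  intros Hj HK Hm.
  assert (Hn : INR n = INR (n - j) + INR j) by (rewrite <- plus_INR; f_equal; lia).
  assert (H1 : 1 <= INR (n - j)) by (apply (le_INR 1); lia).
  pose proof (pos_INR j).
  apply Rle_trans with (((1 + INR j) * INR (n - j)) ^ K).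
  - apply pow_incr; split; [apply pos_INR|nra].
  - rewrite Rpow_mult_distr; apply Rmult_le_compat_r; [apply pow_le; lra|].
    apply Rle_pow; [lra|exact HK].
Qed.

Lemma pow_INR_le_cube n K : (K <= 3)%nat -> INR n ^ K <= (1 + INR n) ^ 3.
Proof.
  intros HK; pose proof (pos_INR n).
  apply Rle_trans with ((1 + INR n) ^ K); [apply pow_incr; lra|apply Rle_pow; [lra|exact HK]].
Qed.

Definition wint (sigma : R) (k : nat) (D : nat -> R -> R) (n : nat) : R :=
  Int01 (fun x => (x / sigma) ^ k * D n x ^ 2).

Lemma gterm_split s k l D n :
  gterm s k l D n = gcoef s n * INR n ^ (k + l) * wint s k D n.
Proof. reflexivity. Qed.

Lemma cont01_weighted_sq s k g : cont01 g -> cont01 (fun x => (x / s) ^ k * g x ^ 2).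
Proof.
  intros Hg; apply cont01_mult; apply cont01_pow; [|exact Hg].
  exact (cont01_mult _ _ cont01_id (cont01_const (/ s))).
Qed.

Lemma weight_ge0 s k x : 0 < s -> 0 < x -> 0 <= (x / s) ^ k.
Proof. intros; apply pow_le, Rlt_le, Rdiv_lt_0_compat; lra. Qed.

Lemma wint_ge0 s k D n : 0 < s -> cont01 (D n) -> 0 <= wint s k D n.
Proof.
  intros Hs HD; apply Int01_ge0; [exact (cont01_weighted_sq s k _ HD)|].
  intros x Hx; apply Rmult_le_pos; [apply weight_ge0; lra|apply pow2_ge_0].
Qed.

Lemma gterm_ge0 s k l D n : 0 < s -> cont01 (D n) -> 0 <= gterm s k l D n.
Proof.
  intros Hs HD; rewrite gterm_split.
  apply Rmult_le_pos; [apply Rmult_le_pos|apply wint_ge0; auto].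
  - apply Rlt_le, gcoef_pos; exact Hs.
  - apply pow_le, pos_INR.
Qed.

(* For k + l > 0 the factor n^(k+l) kills the term of order 0, which therefore has to be
   added back when a shifted index n - j hits 0. *)
Definition gterm_aug s k l D m : R :=
  gterm s k l D m + match m with O => wint s k D O | S _ => 0 end.

Lemma sum_gterm_aug s k l D N :
  sum_f_R0 (gterm_aug s k l D) N = sum_f_R0 (gterm s k l D) N + wint s k D 0.
Proof.
  unfold gterm_aug; induction N as [|N IH]; simpl; [ring|].
  simpl in IH; rewrite IH; ring.
Qed.

Lemma gterm_aug_ge0 s k l D m : 0 < s -> (forall n, cont01 (D n)) -> 0 <= gterm_aug s k l D m.
Proof.
  intros Hs HD; unfold gterm_aug; pose proof (gterm_ge0 s k l D m Hs (HD m)).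
  destruct m; [pose proof (wint_ge0 s k D 0 Hs (HD 0%nat))|]; lra.
Qed.

Lemma ratio_in_unit s s' : 0 < s -> s < s' -> 0 < s / s' < 1.
Proof.
  intros Hs Hss'; split; [apply Rdiv_lt_0_compat; lra|].
  apply Rmult_lt_reg_r with s'; [lra|]; unfold Rdiv; rewrite Rmult_assoc, Rinv_l; lra.
Qed.

(** * The product estimate *)

Section LeibnizEstimate.

Variables (s s' M : R) (k l : nat) (f u : R -> R) (Df Du : nat -> R -> R).
Hypotheses (Hs : 0 < s) (Hss' : s < s') (Hkl : (k + l <= 3)%nat)
  (Hf : smooth01 f Df) (Hu : smooth01 u Du)
  (HDf : forall j x, 0 < x < 1 -> Rabs (Df j x) <= M * (/ s') ^ j * INR (fact j) ^ 2).

Let q := s / s'.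

Let Hq : 0 < q < 1 := ratio_in_unit s s' Hs Hss'.

Let cont_Du : forall n, cont01 (Du n) := smooth01_cont u Du Hu.

Let cont_leibnizD : forall n, cont01 (leibnizD Df Du n) :=
  smooth01_cont _ _ (smooth01_mult f Df u Du Hf Hu).

Definition leibniz_weight (n j : nat) : R :=
  (INR (binom n j) * (M * (/ s') ^ j * INR (fact j) ^ 2)) ^ 2 / q ^ j.

(* Cauchy-Schwarz with the geometric weights q^j, whose total mass is at most 1/(1-q). *)
Lemma leibnizD_sq_le n x : 0 < x < 1 ->
  leibnizD Df Du n x ^ 2
  <= / (1 - q) * sum_f_R0 (fun j => leibniz_weight n j * Du (n - j)%nat x ^ 2) n.
Proof.
  intros Hx. assert (Hqj : forall j, 0 < q ^ j) by (intro; apply pow_lt; lra).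
  unfold leibnizD, leibniz.
  eapply Rle_trans; [exact (sum_sq_le_weighted _ _ n Hqj)|].
  apply Rmult_le_compat.
  - left; apply tech1; auto.
  - apply cond_pos_sum; intro j; pose proof (Hqj j).
    apply Rmult_le_pos; [apply pow2_ge_0|left; apply Rinv_0_lt_compat; lra].
  - rewrite tech3 by lra; unfold Rdiv; rewrite <- (Rmult_1_l (/ (1 - q))) at 2.
    apply Rmult_le_compat_r; [left; apply Rinv_0_lt_compat; lra|].
    pose proof (pow_lt q (S n) (proj1 Hq)); lra.
  - apply sum_Rle; intros j Hj; unfold leibniz_weight; pose proof (Hqj j).
    assert (HDf2 : Df j x ^ 2 <= (M * (/ s') ^ j * INR (fact j) ^ 2) ^ 2).
    { rewrite <- pow2_abs; apply pow_incr; split; [apply Rabs_pos|apply HDf; exact Hx]. }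
    set (K := INR (binom n j) ^ 2 * Du (n - j)%nat x ^ 2 / q ^ j).
    assert (HK : 0 <= K).
    { unfold K; apply Rmult_le_pos; [apply Rmult_le_pos; apply pow2_ge_0|].
      left; apply Rinv_0_lt_compat; lra. }
    replace ((INR (binom n j) * Df j x * Du (n - j)%nat x) ^ 2 / q ^ j)
      with (K * Df j x ^ 2) by (unfold K; field; lra).
    replace ((INR (binom n j) * (M * (/ s') ^ j * INR (fact j) ^ 2)) ^ 2 / q ^ j
               * Du (n - j)%nat x ^ 2)
      with (K * (M * (/ s') ^ j * INR (fact j) ^ 2) ^ 2) by (unfold K; field; lra).
    apply Rmult_le_compat_l; assumption.
Qed.

Lemma wint_leibnizD_le n :
  wint s k (leibnizD Df Du) n
  <= / (1 - q) * sum_f_R0 (fun j => leibniz_weight n j * wint s k Du (n - j)) n.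
Proof.
  set (G j x := (x / s) ^ k * Du (n - j)%nat x ^ 2).
  assert (HG : forall j, cont01 (G j)) by (intro j; apply cont01_weighted_sq, cont_Du).
  replace (/ (1 - q) * sum_f_R0 (fun j => leibniz_weight n j * wint s k Du (n - j)) n)
    with (Int01 (fun x => sum_f_R0 (fun j => / (1 - q) * leibniz_weight n j * G j x) n)).
  2:{ rewrite Int01_sum by exact HG; rewrite scal_sum; apply sum_eq; intros.
      unfold wint, G; ring. }
  apply Int01_le.
  - apply cont01_weighted_sq, cont_leibnizD.
  - apply cont01_sum; intro j; apply cont01_mult; [apply cont01_const|apply HG].
  - intros x Hx.
    replace (sum_f_R0 (fun j => / (1 - q) * leibniz_weight n j * G j x) n)
      with ((x / s) ^ k * (/ (1 - q) * sum_f_R0 (fun j => leibniz_weight n j * Du (n - j)%nat x ^ 2) n))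
      by (rewrite !scal_sum; apply sum_eq; intros; unfold G; ring).
    apply Rmult_le_compat_l; [apply weight_ge0; lra|apply leibnizD_sq_le; exact Hx].
Qed.

Lemma gcoef_lcoef_le n j : (j <= n)%nat ->
  gcoef s n * leibniz_weight n j <= M ^ 2 * q ^ j * gcoef s (n - j).
Proof.
  intros Hj. assert (Hqj : 0 < q ^ j) by (apply pow_lt; lra).
  assert (Hbound := gcoef_binom_le s s' n j Hs ltac:(lra) Hj); fold q in Hbound.
  apply Rmult_le_reg_r with (q ^ j); [exact Hqj|].
  unfold leibniz_weight; rewrite binom_C by exact Hj.
  replace (gcoef s n * ((C n j * (M * (/ s') ^ j * INR (fact j) ^ 2)) ^ 2 / q ^ j) * q ^ j)
    with (M ^ 2 * (gcoef s n * (C n j * ((/ s') ^ j * INR (fact j) ^ 2)) ^ 2))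
    by (field; lra).
  replace (M ^ 2 * q ^ j * gcoef s (n - j) * q ^ j)
    with (M ^ 2 * (q ^ (2 * j) * gcoef s (n - j)))
    by (replace (2 * j)%nat with (j + j)%nat by lia; rewrite pow_add; ring).
  apply Rmult_le_compat_l; [apply pow2_ge_0|exact Hbound].
Qed.

Lemma gterm_shift_le n j : (j <= n)%nat ->
  INR n ^ (k + l) * (gcoef s (n - j) * wint s k Du (n - j))
  <= (1 + INR j) ^ 3 * gterm_aug s k l Du (n - j).
Proof.
  intros Hj. unfold gterm_aug; rewrite gterm_split.
  assert (HI := wint_ge0 s k Du (n - j) Hs (cont_Du _)).
  assert (Hg := gcoef_pos s (n - j) Hs).
  pose proof (pos_INR j); pose proof (pos_INR n).
  destruct (Nat.eq_dec n j) as [<-|Hnj].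
  - rewrite Nat.sub_diag in *; rewrite gcoef_0 in *.
    apply Rle_trans with ((1 + INR n) ^ 3 * wint s k Du 0).
    + rewrite Rmult_1_l; apply Rmult_le_compat_r; [exact HI|exact (pow_INR_le_cube n _ Hkl)].
    + apply Rmult_le_compat_l; [apply pow_le; lra|].
      assert (0 <= INR 0 ^ (k + l)) by (apply pow_le, pos_INR); nra.
  - assert (Hshift := pow_INR_le_shift n j (k + l) Hj Hkl ltac:(lia)).
    replace (match (n - j)%nat with O => wint s k Du 0 | S _ => 0 end) with 0
      by (destruct (n - j)%nat eqn:E; [lia|reflexivity]).
    rewrite Rplus_0_r.
    replace ((1 + INR j) ^ 3 * (gcoef s (n - j) * INR (n - j) ^ (k + l) * wint s k Du (n - j)))
      with ((1 + INR j) ^ 3 * INR (n - j) ^ (k + l) * (gcoef s (n - j) * wint s k Du (n - j)))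
      by ring.
    apply Rmult_le_compat_r; [apply Rmult_le_pos; lra|exact Hshift].
Qed.

Lemma gterm_leibnizD_le n :
  gterm s k l (leibnizD Df Du) n
  <= M ^ 2 / (1 - q)
     * sum_f_R0 (fun j => q ^ j * (1 + INR j) ^ 3 * gterm_aug s k l Du (n - j)) n.
Proof.
  assert (Hc : 0 < / (1 - q)) by (apply Rinv_0_lt_compat; lra).
  assert (HnK : 0 <= INR n ^ (k + l)) by (apply pow_le, pos_INR).
  rewrite gterm_split.
  eapply Rle_trans.
  { apply Rmult_le_compat_l; [|apply wint_leibnizD_le].
    apply Rmult_le_pos; [apply Rlt_le, gcoef_pos, Hs|exact HnK]. }
  rewrite <- Rmult_assoc, !scal_sum; apply sum_Rle; intros j Hj.
  assert (HI := wint_ge0 s k Du (n - j) Hs (cont_Du _)).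
  assert (Hqj : 0 < q ^ j) by (apply pow_lt; lra).
  apply Rle_trans with
    (/ (1 - q) * INR n ^ (k + l) * (M ^ 2 * q ^ j * gcoef s (n - j)) * wint s k Du (n - j)).
  - replace (leibniz_weight n j * wint s k Du (n - j) * (gcoef s n * INR n ^ (k + l) * / (1 - q)))
      with (/ (1 - q) * INR n ^ (k + l) * (gcoef s n * leibniz_weight n j) * wint s k Du (n - j))
      by ring.
    apply Rmult_le_compat_r; [exact HI|].
    apply Rmult_le_compat_l; [apply Rmult_le_pos; lra|exact (gcoef_lcoef_le n j Hj)].
  - replace (/ (1 - q) * INR n ^ (k + l) * (M ^ 2 * q ^ j * gcoef s (n - j))
               * wint s k Du (n - j))
      with (/ (1 - q) * M ^ 2 * q ^ j
            * (INR n ^ (k + l) * (gcoef s (n - j) * wint s k Du (n - j)))) by ring.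
    replace (q ^ j * (1 + INR j) ^ 3 * gterm_aug s k l Du (n - j) * (M ^ 2 / (1 - q)))
      with (/ (1 - q) * M ^ 2 * q ^ j * ((1 + INR j) ^ 3 * gterm_aug s k l Du (n - j)))
      by (unfold Rdiv; ring).
    apply Rmult_le_compat_l; [|exact (gterm_shift_le n j Hj)].
    apply Rmult_le_pos; [apply Rmult_le_pos; [lra|apply pow2_ge_0]|lra].
Qed.

Lemma leibnizD_series_cv Su G :
  Un_cv (fun N => sum_f_R0 (gterm s k l Du) N) Su ->
  (forall N, sum_f_R0 (fun j => q ^ j * (1 + INR j) ^ 3) N <= G) ->
  exists S', Un_cv (fun N => sum_f_R0 (gterm s k l (leibnizD Df Du)) N) S' /\
             S' <= M ^ 2 / (1 - q) * G * (Su + wint s k Du 0).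
Proof.
  intros HS HG.
  assert (Hc : 0 <= M ^ 2 / (1 - q)).
  { apply Rmult_le_pos; [apply pow2_ge_0|left; apply Rinv_0_lt_compat; lra]. }
  assert (Hgterm : forall n, 0 <= gterm s k l Du n) by (intro; apply gterm_ge0; auto).
  assert (Hpartial : forall N, sum_f_R0 (gterm s k l (leibnizD Df Du)) N
                               <= M ^ 2 / (1 - q) * G * (Su + wint s k Du 0)).
  { intros N. eapply Rle_trans; [apply sum_Rle; intros n _; apply gterm_leibnizD_le|].
    replace (sum_f_R0 (fun n => M ^ 2 / (1 - q) * sum_f_R0
               (fun j => q ^ j * (1 + INR j) ^ 3 * gterm_aug s k l Du (n - j)) n) N)
      with (M ^ 2 / (1 - q) * sum_f_R0 (fun n => sum_f_R0
               (fun j => q ^ j * (1 + INR j) ^ 3 * gterm_aug s k l Du (n - j)) n) N)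
      by (rewrite scal_sum; apply sum_eq; intros; ring).
    rewrite Rmult_assoc; apply Rmult_le_compat_l; [exact Hc|].
    assert (Hgeom : forall j, 0 <= q ^ j * (1 + INR j) ^ 3).
    { intro j; pose proof (pos_INR j).
      apply Rmult_le_pos; apply pow_le; lra. }
    eapply Rle_trans.
    { apply (sum_cauchy_product_le (fun j => q ^ j * (1 + INR j) ^ 3)); [exact Hgeom|].
      intro; apply gterm_aug_ge0; auto. }
    rewrite sum_gterm_aug; apply Rmult_le_compat.
    - apply cond_pos_sum; exact Hgeom.
    - pose proof (cond_pos_sum _ N Hgterm); pose proof (wint_ge0 s k Du 0 Hs (cont_Du _)); lra.
    - apply HG.
    - pose proof (sum_incr _ N Su HS Hgterm); lra. }
  assert (Hgrow : Un_growing (fun N => sum_f_R0 (gterm s k l (leibnizD Df Du)) N)).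
  { intro n; simpl; pose proof (gterm_ge0 s k l _ (S n) Hs (cont_leibnizD _)); lra. }
  destruct (growing_cv _ Hgrow) as [S' HS'].
  { exists (M ^ 2 / (1 - q) * G * (Su + wint s k Du 0)); intros x [N ->]; apply Hpartial. }
  exists S'; split; [exact HS'|].
  apply Rnot_lt_le; intro Hlt.
  destruct (HS' (S' - M ^ 2 / (1 - q) * G * (Su + wint s k Du 0))) as [N HN]; [lra|].
  specialize (HN N (le_n N)); specialize (Hpartial N).
  unfold R_dist in HN; rewrite Rabs_left1 in HN; lra.
Qed.

Lemma wint0_leibnizD_le :
  wint s k (leibnizD Df Du) 0 <= M ^ 2 / (1 - q) * wint s k Du 0.
Proof.
  eapply Rle_trans; [apply wint_leibnizD_le|].
  right; unfold leibniz_weight; simpl; field; lra.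
Qed.

End LeibnizEstimate.

(** * Norms *)

Lemma seminorm0_eq s k l D S :
  Un_cv (fun N => sum_f_R0 (gterm s k l D) N) S -> seminorm0 s k l D = sqrt S.
Proof.
  intros H; unfold seminorm0; f_equal.
  eapply UL_sequence; [|exact H].
  exact (epsilon_spec (inhabits 0) (fun S => Un_cv _ S) (ex_intro _ S H)).
Qed.

Lemma sqrt_plus_le a b : 0 <= a -> 0 <= b -> sqrt (a + b) <= sqrt a + sqrt b.
Proof.
  intros Ha Hb. pose proof (sqrt_pos a); pose proof (sqrt_pos b).
  rewrite <- (sqrt_square (sqrt a + sqrt b)) by lra; apply sqrt_le_1_alt.
  pose proof (sqrt_sqrt a Ha); pose proof (sqrt_sqrt b Hb); nra.
Qed.

Lemma gseries_ge0 s k l u D S : 0 < s -> smooth01 u D ->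
  Un_cv (fun N => sum_f_R0 (gterm s k l D) N) S -> 0 <= S.
Proof.
  intros Hs Hu HS; apply Rle_trans with (gterm s k l D 0).
  - exact (gterm_ge0 s k l D 0 Hs (smooth01_cont u D Hu 0)).
  - exact (sum_incr _ 0 S HS (fun n => gterm_ge0 s k l D n Hs (smooth01_cont u D Hu n))).
Qed.

Lemma wint0_le_gseries s k l u D S : (k + l)%nat = 0%nat -> 0 < s -> smooth01 u D ->
  Un_cv (fun N => sum_f_R0 (gterm s k l D) N) S -> wint s k D 0 <= S.
Proof.
  intros Hkl Hs Hu HS.
  pose proof (sum_incr _ 0 S HS (fun n => gterm_ge0 s k l D n Hs (smooth01_cont u D Hu n))).
  simpl in H; rewrite gterm_split, gcoef_0, Hkl in H; simpl in H; lra.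
Qed.

Lemma gnorm_le_of_bounds s k l (Du Dv : nat -> R -> R) S S' A B :
  0 <= A -> 0 <= B -> 0 <= S -> 0 <= wint s k Du 0 ->
  Un_cv (fun N => sum_f_R0 (gterm s k l Du) N) S ->
  Un_cv (fun N => sum_f_R0 (gterm s k l Dv) N) S' ->
  S' <= A * (S + wint s k Du 0) -> wint s k Dv 0 <= B * wint s k Du 0 ->
  ((k + l)%nat = 0%nat -> wint s k Du 0 <= S) ->
  gnorm s k l Dv <= (sqrt (2 * A) + sqrt B) * gnorm s k l Du.
Proof.
  intros HA HB HS0 HI0 HS HS' HS'le HJ0 Hkl0.
  unfold gnorm; rewrite (seminorm0_eq _ _ _ _ _ HS), (seminorm0_eq _ _ _ _ _ HS').
  fold (wint s k Du 0) (wint s k Dv 0).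
  pose proof (sqrt_pos (2 * A)); pose proof (sqrt_pos B);
  pose proof (sqrt_pos S); pose proof (sqrt_pos (wint s k Du 0)).
  assert (HsqA : sqrt A <= sqrt (2 * A)) by (apply sqrt_le_1_alt; lra).
  destruct (Nat.eqb (k + l) 0) eqn:E.
  - apply Nat.eqb_eq, Hkl0 in E.
    apply Rle_trans with (sqrt (2 * A) * sqrt S).
    + rewrite <- sqrt_mult by lra; apply sqrt_le_1_alt; nra.
    + pose proof (Rmult_le_pos _ _ (sqrt_pos B) (sqrt_pos S)); nra.
  - assert (E1 : sqrt S' <= sqrt A * (sqrt S + sqrt (wint s k Du 0))).
    { apply Rle_trans with (sqrt (A * (S + wint s k Du 0))); [apply sqrt_le_1_alt; exact HS'le|].
      rewrite sqrt_mult by lra; apply Rmult_le_compat_l; [apply sqrt_pos|].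
      apply sqrt_plus_le; assumption. }
    assert (E2 : sqrt (wint s k Dv 0) <= sqrt B * sqrt (wint s k Du 0)).
    { rewrite <- sqrt_mult by lra; apply sqrt_le_1_alt; exact HJ0. }
    assert (E3 : sqrt A * (sqrt S + sqrt (wint s k Du 0))
                 <= sqrt (2 * A) * (sqrt S + sqrt (wint s k Du 0)))
      by (apply Rmult_le_compat_r; lra).
    pose proof (Rmult_le_pos _ _ (sqrt_pos B) (sqrt_pos S)).
    replace ((sqrt (2 * A) + sqrt B) * (sqrt S + sqrt (wint s k Du 0)))
      with (sqrt (2 * A) * (sqrt S + sqrt (wint s k Du 0))
            + sqrt B * sqrt (wint s k Du 0) + sqrt B * sqrt S) by ring.
    lra.
Qed.

Theorem mainTheorem4 :
  forall (sigma sigma' : R) (k l : nat) (f : R -> R) (Df : nat -> R -> R),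
    0 < sigma -> sigma < sigma' -> (k <= 2)%nat -> (l <= 1)%nat ->
    smooth01 f Df -> gevrey sigma' 2 Df ->
    exists C : R,
      forall (u : R -> R) (Du : nat -> R -> R),
        smooth01 u Du -> in_G sigma k l Du ->
        exists Dfu : nat -> R -> R,
          smooth01 (fun x => f x * u x) Dfu /\
          in_G sigma k l Dfu /\
          gnorm sigma k l Dfu <= C * gnorm sigma k l Du.
Proof.
  intros s s' k l f Df Hs Hss' Hk Hl Hf [M HM].
  assert (Hkl : (k + l <= 3)%nat) by lia.
  assert (Hq := ratio_in_unit s s' Hs Hss').
  destruct (geom_cubic_bounded _ Hq) as [G HG].
  assert (HG0 : 0 <= G) by (specialize (HG 0%nat); simpl in HG; lra).
  set (B := M ^ 2 / (1 - s / s')).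
  assert (HB : 0 <= B).
  { apply Rmult_le_pos; [apply pow2_ge_0|left; apply Rinv_0_lt_compat; lra]. }
  exists (sqrt (2 * (B * G)) + sqrt B).
  intros u Du Hu [S HS].
  destruct (leibnizD_series_cv s s' M k l f u Df Du Hs Hss' Hkl Hf Hu HM S G HS HG)
    as [S' [HS' HS'le]].
  exists (leibnizD Df Du); split; [exact (smooth01_mult f Df u Du Hf Hu)|].
  split; [exists S'; exact HS'|].
  apply (gnorm_le_of_bounds s k l Du _ S S').
  - apply Rmult_le_pos; assumption.
  - exact HB.
  - exact (gseries_ge0 s k l u Du S Hs Hu HS).
  - exact (wint_ge0 s k Du 0 Hs (smooth01_cont u Du Hu 0)).
  - exact HS.
  - exact HS'.
  - exact HS'le.
  - exact (wint0_leibnizD_le s s' M k f u Df Du Hs Hss' Hf Hu HM).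
  - intro Hkl0; exact (wint0_le_gseries s k l u Du S Hkl0 Hs Hu HS).
Qed.
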